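(* Fix integers $n\ge 3$, $k\ge 2$, $s>0$ and integers $d_i,g_i$ for $1\le i\le s$ with $d_i>g_i\ge 0$ for all $i$, such that $$\sum_{i=1}^{s}(kd_i+1-g_i)\le \binom{n+k}{n}.$$ Then $$\sum_{i=1}^{s}((k+1)d_i+1-g_i)<\binom{n+k+1}{n}.$$ *)

From mathcomp Require Import all_boot all_order all_algebra.

From mathcomp Require Import all_boot all_order all_algebra.
From mathcomp Require Import zify ring.
Import Order.TTheory GRing.Theory Num.Theory.
Local Open Scope ring_scope.

(* Write A for the left-hand sum of the hypothesis and D for the sum of the
   degrees d_i.  Raising k to k + 1 adds exactly D, while Pascal's rule adds
   'C(n + k, n - 1) to the bound, so it suffices to show D < 'C(n + k, n - 1).
   Since g_i < d_i, every term of A exceeds (k - 1) d_i, hence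
   (k - 1) D < A <= 'C(n + k, n); and (k + 1) 'C(n + k, n - 1) = n 'C(n + k, n)
   with n (k - 1) >= k + 1 for n >= 3, k >= 2. *)

Lemma binD1_pred (n k : nat) : (0 < n)%N ->
  'C(n + k + 1, n) = ('C(n + k, n) + 'C(n + k, n.-1))%N.
Proof. by case: n => // n _; rewrite addn1 binS. Qed.

Lemma ltn_bin_pred (n k D : nat) : (k.+1 <= n * (k - 1))%N ->
  ((k - 1) * D < 'C(n + k, n))%N -> (D < 'C(n + k, n.-1))%N.
Proof.
case: n => [|m]; first by rewrite mul0n.
move=> le_k_mk ltDC; rewrite /= -(ltn_pmul2l (ltn0Sn k)).
have -> : (k.+1 * 'C(m.+1 + k, m) = m.+1 * 'C(m.+1 + k, m.+1))%N.
  by rewrite mul_bin_left; congr (_ * _)%N; lia.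
apply: (leq_ltn_trans (leq_mul le_k_mk (leqnn D))).
by rewrite -mulnA ltn_pmul2l.
Qed.

Section WeightedSums.

Variables (I : finType) (k : nat) (d g : I -> nat).

Lemma sum_weights_succ :
  \sum_i (((k + 1) * d i)%:Z + 1 - (g i)%:Z)
  = \sum_i ((k * d i)%:Z + 1 - (g i)%:Z) + (\sum_i d i)%N%:Z.
Proof.
rewrite (big_morph Posz PoszD (erefl 0%:Z)) -big_split /=.
by apply: eq_bigr => i _; rewrite mulnDl mul1n PoszD; ring.
Qed.

Lemma sum_weights_ge : (0 < k)%N -> (forall i, g i <= d i)%N ->
  (((k - 1) * \sum_i d i)%N + #|I|)%:Z <= \sum_i ((k * d i)%:Z + 1 - (g i)%:Z).
Proof.
move=> k_gt0 le_gd.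
have -> : (((k - 1) * \sum_i d i)%N + #|I|)%:Z = \sum_i (((k - 1) * d i)%:Z + 1).
  rewrite big_split /= sumr_const big_distrr /= natz PoszD.
  by rewrite (big_morph Posz PoszD (erefl 0%:Z)).
by apply: ler_sum => i _; have := le_gd i; nia.
Qed.

End WeightedSums.

Theorem lemma3p11 (n k s : nat) (d g : 'I_s -> nat)
  (hn : (3 <= n)%N) (hk : (2 <= k)%N) (hs : (0 < s)%N)
  (hdg : forall i, (g i < d i)%N)
  (hsum : \sum_(i < s) ((k * d i)%:Z + 1 - (g i)%:Z) <= ('C(n + k, n))%:Z) :
  \sum_(i < s) (((k + 1) * d i)%:Z + 1 - (g i)%:Z) < ('C(n + k + 1, n))%:Z.
Proof.
have lower := @sum_weights_ge _ k d g (ltnW hk) (fun i => ltnW (hdg i)).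
rewrite card_ord in lower.
have ltDC : ((k - 1) * \sum_(i < s) d i < 'C(n + k, n))%N.
  rewrite -ltz_nat (lt_le_trans _ (le_trans lower hsum)) // ltz_nat.
  by rewrite -[X in (X < _)%N]addn0 ltn_add2l.
have ltDB : (\sum_(i < s) d i < 'C(n + k, n.-1))%N.
  by apply: ltn_bin_pred ltDC; nia.
rewrite sum_weights_succ binD1_pred; last by apply: leq_trans hn.
by rewrite PoszD ler_ltD // ltz_nat.
Qed.
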